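(* Let $k \geq 2$ be an integer. Let $G$ be a finite simple graph with $|V(G)| = \gamma k$ where $\gamma \geq \frac{5}{2}$, and suppose that $\frac{1}{k^2}|E(G)| > \frac{19}{12}(\gamma - 1)$. Then $G$ contains a $(k+1)$-connected subgraph. Equivalently, every $n$-vertex graph with $n \geq \frac{5}{2}k$ and more than $\frac{19}{12}k(n-k)$ edges contains a $(k+1)$-connected subgraph.
   Context: All graphs are finite, undirected and simple. A graph $H$ is $(k+1)$-connected if for every set $S \subseteq V(H)$ with $|S| = k$, the graph $H - S$ (obtained by deleting $S$) is connected and has at least two vertices; in particular $|V(H)| \geq k+2$. *)

(* Simple graphs: symmetric irreflexive relation e on a finType T. *)
From mathcomp Require Import all_boot all_order all_algebra.
Set Implicit Arguments. Unset Strict Implicit. Unset Printing Implicit Defensive.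

Definition edges (T : finType) (e : rel T) : {set {set T}} :=
  [set [set p.1; p.2] | p : T * T & e p.1 p.2].

Definition connected_on (T : finType) (W : {set T}) (f : rel T) : Prop :=
  forall x y, x \in W -> y \in W ->
    connect [rel u v | [&& u \in W, v \in W & f u v]] x y.

Definition k1_connected (T : finType) (k : nat) (U : {set T}) (f : rel T) : Prop :=
  k.+2 <= #|U| /\
  forall S : {set T}, S \subset U -> #|S| = k ->
    connected_on (U :\: S) f /\ 2 <= #|U :\: S|.

Definition has_k1_connected_subgraph (T : finType) (e : rel T) (k : nat) : Prop :=
  exists (U : {set T}) (f : rel T),
    (forall x y, f x y -> [&& x \in U, y \in U & e x y]) /\
    symmetric f /\ irreflexive f /\ k1_connected k U f.

From mathcomp Require Import all_boot all_order all_algebra.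
From mathcomp Require Import zify lra.
From Stdlib Require Import Classical.
Set Implicit Arguments. Unset Strict Implicit. Unset Printing Implicit Defensive.

(* Suppose G has no (k+1)-connected subgraph. Then every vertex set W with
   |W| >= k + 2 has a separator S of size k, with sides A and B, and the edges
   of G[W] are those of G[A + S] together with those meeting B. A side A with
   |A| >= k + 2 loses little when shrunk: some vertex of A has fewer than
   (|A| + |S| + k) / 2 neighbours in A + S, or some vertex of S has at most k
   neighbours in A, since otherwise two non-adjacent vertices of A have more
   than k common neighbours and G[A + S] is (k+1)-connected. Induction on |W|
   gives e(G[W]) <= C(k,2) + k x + x^2/6 for x = |W| - k, and, once x >= 3k/2,
   the linear bound e(G[W]) <= 19 k x / 12, which is the theorem for W = V(G). *)

Section ArcCounting.
Variables (T : finType) (e : rel T).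
Hypotheses (e_sym : symmetric e) (e_irr : irreflexive e).

Definition nbhd (u : T) (Y : {set T}) : {set T} := [set v in Y | e u v].

(* [arcs W W] is twice the number of edges of G[W]. *)
Definition arcs (X Y : {set T}) : nat := \sum_(u in X) #|nbhd u Y|.

Lemma card_nbhdE u (Y : {set T}) : #|nbhd u Y| = \sum_(v in Y) (e u v : nat).
Proof.
rewrite /nbhd -sum1_card big_mkcond [RHS]big_mkcond /=.
by apply: eq_bigr => v _; rewrite inE; case: (v \in Y); case: (e u v).
Qed.

Lemma card_nbhd_le u (Y : {set T}) : #|nbhd u Y| <= #|Y|.
Proof. by apply: subset_leq_card; apply/subsetP => v; rewrite inE => /andP[]. Qed.

Lemma card_nbhd_self_le u (Y : {set T}) : u \in Y -> #|nbhd u Y| <= #|Y| - 1.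
Proof.
move=> uY; rewrite (cardsD1 u Y) uY add1n subn1.
apply: subset_leq_card; apply/subsetP => v; rewrite !inE => /andP[-> euv].
by rewrite andbT; apply: contraTneq euv => ->; rewrite e_irr.
Qed.

Lemma arcsC (X Y : {set T}) : arcs X Y = arcs Y X.
Proof.
rewrite /arcs; under eq_bigr => u _ do rewrite card_nbhdE.
rewrite exchange_big; apply: eq_bigr => v _; rewrite card_nbhdE.
by apply: eq_bigr => u _; rewrite e_sym.
Qed.

Lemma arcsUl (X1 X2 Y : {set T}) :
  [disjoint X1 & X2] -> arcs (X1 :|: X2) Y = arcs X1 Y + arcs X2 Y.
Proof. by move=> dX; rewrite /arcs (eq_bigl [predU X1 & X2]) ?bigU // => u; rewrite !inE. Qed.

Lemma arcsUr (X Y1 Y2 : {set T}) :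
  [disjoint Y1 & Y2] -> arcs X (Y1 :|: Y2) = arcs X Y1 + arcs X Y2.
Proof. by move=> dY; rewrite arcsC arcsUl // !(arcsC _ X). Qed.

Lemma arcsUU (X Y : {set T}) : [disjoint X & Y] ->
  arcs (X :|: Y) (X :|: Y) = arcs X X + 2 * arcs X Y + arcs Y Y.
Proof. by move=> dXY; rewrite arcsUl // !arcsUr // (arcsC Y X); lia. Qed.

Lemma arcs_set1l u (Y : {set T}) : arcs [set u] Y = #|nbhd u Y|.
Proof. by rewrite /arcs big_set1. Qed.

Lemma arcs_le (X Y : {set T}) : arcs X Y <= #|X| * #|Y|.
Proof. by rewrite /arcs -sum_nat_const; apply: leq_sum => u _; apply: card_nbhd_le. Qed.

Lemma arcs_self_le (X : {set T}) : arcs X X <= #|X| * (#|X| - 1).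
Proof.
by rewrite /arcs -sum_nat_const; apply: leq_sum => u uX; apply: card_nbhd_self_le.
Qed.

Lemma arcs_eq0 (X Y : {set T}) :
  (forall u v, u \in X -> v \in Y -> ~~ e u v) -> arcs X Y = 0.
Proof.
move=> nXY; rewrite /arcs big1 // => u uX; apply/eqP; rewrite cards_eq0.
apply/eqP/setP => v; rewrite !inE; apply/negbTE/andP => -[vY euv].
by move: (nXY u v uX vY); rewrite euv.
Qed.

Lemma arcs_delete_self u (X : {set T}) : u \in X ->
  arcs X X = arcs (X :\ u) (X :\ u) + 2 * #|nbhd u (X :\ u)|.
Proof.
have d1 : [disjoint [set u] & X :\ u] by rewrite disjoints1 setD11.
move=> uX; rewrite -{1 2}(setD1K uX) arcsUU // !arcs_set1l.
suff -> : #|nbhd u [set u]| = 0 by lia.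
apply/eqP; rewrite cards_eq0; apply/eqP/setP => z; rewrite !inE.
by case: eqP => // ->; rewrite e_irr.
Qed.

Lemma arcs_deletel u (X Y : {set T}) : u \in X -> arcs X Y = #|nbhd u Y| + arcs (X :\ u) Y.
Proof. by move=> uX; rewrite -{1}(setD1K uX) arcsUl ?disjoints1 ?setD11 // arcs_set1l. Qed.

Lemma arcs_deleter s (X Y : {set T}) : s \in Y -> arcs X Y = #|nbhd s X| + arcs X (Y :\ s).
Proof. by move=> sY; rewrite arcsC (arcs_deletel X sY) (arcsC (Y :\ s)). Qed.

Lemma arcs_side_deletel u (A S : {set T}) : u \in A -> [disjoint A & S] ->
  arcs A A + 2 * arcs A S <=
  arcs (A :\ u) (A :\ u) + 2 * arcs (A :\ u) S + 2 * #|nbhd u (A :|: S)|.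
Proof.
move=> uA dAS; rewrite (arcs_delete_self uA) (arcs_deletel S uA).
have dA'S : [disjoint A :\ u & S] by apply: disjointWl dAS; apply: subsetDl.
suff : #|nbhd u (A :\ u)| + #|nbhd u S| <= #|nbhd u (A :|: S)| by lia.
rewrite -!arcs_set1l -arcsUr // !arcs_set1l; apply: subset_leq_card.
by apply/subsetP => z; rewrite !inE => /andP[/orP[/andP[_ ->]|->] ->]; rewrite ?orbT.
Qed.

Lemma arcs_setT : arcs setT setT = #|[set p : T * T | e p.1 p.2]|.
Proof.
rewrite /arcs big_set; under eq_bigr => u _ do rewrite card_nbhdE big_set.
rewrite pair_bigA /= -sum1_card [RHS]big_mkcond /=.
by apply: eq_bigr => p _; rewrite inE; case: (e p.1 p.2).
Qed.

Lemma endpoints_eq (x y a b : T) : e x y ->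
  (e a b && ([set a; b] == [set x; y])) = ((a, b) \in [set (x, y); (y, x)]).
Proof.
move=> exy; rewrite !inE !xpair_eqE; apply/idP/idP; last first.
  case/orP=> /andP[/eqP -> /eqP ->]; first by rewrite exy eqxx.
  by rewrite e_sym exy setUC eqxx.
move=> /andP[eab /eqP ab_xy].
have aP : a \in [set x; y] by rewrite -ab_xy set21.
have bP : b \in [set x; y] by rewrite -ab_xy set22.
case/set2P: aP => ?; case/set2P: bP => ?; subst a b; rewrite ?eqxx ?orbT //.
all: by rewrite e_irr in eab.
Qed.

Lemma card_adjacent_pairs : #|[set p : T * T | e p.1 p.2]| = 2 * #|edges e|.
Proof.
rewrite -sum1_card (partition_big_imset (fun p : T * T => [set p.1; p.2])) /=.
rewrite mulnC -sum_nat_const; apply: eq_bigr => E /imsetP[[x y]]; rewrite inE /= => exy ->.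
rewrite (eq_bigl (mem [set (x, y); (y, x)])) => [|[a b]].
  by rewrite sum1_card cards2; case: eqP => // -[xy _]; rewrite xy e_irr in exy.
by rewrite inE /= -(endpoints_eq _ _ exy).
Qed.

End ArcCounting.

Section InducedConnectivity.
Variables (T : finType) (e : rel T).
Hypotheses (e_sym : symmetric e) (e_irr : irreflexive e).
Variable k : nat.

Definition induced (W : {set T}) : rel T := [rel x y | [&& x \in W, y \in W & e x y]].

Lemma induced_sym W : symmetric (induced W).
Proof. by move=> x y; rewrite /induced /= e_sym; do 2!case: (_ \in W). Qed.

Lemma has_k1_connected_induced W : k1_connected k W (induced W) -> has_k1_connected_subgraph e k.
Proof.
move=> W_conn; exists W, (induced W); split=> //; split; first exact: induced_sym.
by split=> // x; rewrite /induced /= e_irr !andbF.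
Qed.

Lemma exists_notin_of_card_lt (Y Z : {set T}) : #|Z| < #|Y| -> exists2 w, w \in Y & w \notin Z.
Proof.
move=> ltZY; have /subsetPn[w] : ~~ (Y \subset Z).
  by apply: contraTN ltZY => /subset_leq_card; rewrite leqNgt.
by exists w.
Qed.

Lemma card_common_nbhd (W : {set T}) u v :
  u \in W -> v \in W -> u != v -> ~~ e u v ->
  #|W| + k <= (2 * #|nbhd e u W|).+1 -> #|W| + k <= (2 * #|nbhd e v W|).+1 ->
  k < #|nbhd e u W :&: nbhd e v W|.
Proof.
move=> uW vW uv nuv du dv.
have sub : nbhd e u W :|: nbhd e v W \subset (W :\ u) :\ v.
  apply/subsetP => w; rewrite !inE => /orP[]/andP[-> ew]; rewrite andbT.
    by apply/andP; split; apply: contraTneq ew => ->; rewrite ?e_irr // e_sym.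
  by apply/andP; split; apply: contraTneq ew => ->; rewrite ?e_irr // e_sym.
have := subset_leq_card sub; have := cardsUI (nbhd e u W) (nbhd e v W).
rewrite (cardsD1 u W) uW (cardsD1 v (W :\ u)) !inE eq_sym uv vW in du dv *.
lia.
Qed.

Lemma induced_k1_connected (W A : {set T}) :
  A \subset W -> k.+2 <= #|A| ->
  (forall u, u \in A -> #|W| + k <= (2 * #|nbhd e u W|).+1) ->
  (forall s, s \in W -> s \notin A -> k < #|nbhd e s A|) ->
  k1_connected k W (induced W).
Proof.
move=> AW kA degA degW; have leAW := subset_leq_card AW.
split=> [|S SW cardS]; first exact: leq_trans kA leAW.
have cardX : #|W :\: S| = #|W| - k by rewrite cardsDS // cardS.
split; last by rewrite cardX; lia.
set X := W :\: S; set R := [rel u v | [&& u \in X, v \in X & induced W u v]].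
have XW z : z \in X -> z \in W by rewrite inE => /andP[].
have edgeR u v : u \in X -> v \in X -> e u v -> R u v.
  by move=> uX vX euv; rewrite /= uX vX /induced /= (XW u uX) (XW v vX).
have connA u v : u \in A -> v \in A -> u \in X -> v \in X -> connect R u v.
  move=> uA vA uX vX; have [->|uv] := eqVneq u v; first exact: connect0.
  have [euv|neuv] := boolP (e u v); first exact/connect1/edgeR.
  have := card_common_nbhd (XW u uX) (XW v vX) uv neuv (degA u uA) (degA v vA).
  rewrite -cardS => /exists_notin_of_card_lt[w].
  rewrite !inE => /andP[/andP[wW euw] /andP[_ evw]] wS.
  have wX : w \in X by rewrite inE wS wW.
  by apply: (@connect_trans _ _ w); apply/connect1/edgeR; rewrite // e_sym.
have reachA s : s \in X -> exists2 u, u \in A /\ u \in X & connect R s u.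
  move=> sX; have [sA|sA] := boolP (s \in A); first by exists s; last exact: connect0.
  have := degW s (XW s sX) sA; rewrite -cardS => /exists_notin_of_card_lt[u].
  rewrite inE => /andP[uA esu] uS.
  have uX : u \in X by rewrite inE uS (subsetP AW).
  by exists u => //; apply/connect1/edgeR.
move=> x y xX yX.
have [ux [uxA uxX] xux] := reachA x xX; have [uy [uyA uyX] yuy] := reachA y yX.
apply: (connect_trans xux); apply: (connect_trans (connA _ _ uxA uyA uxX uyX)).
have symR : symmetric R by move=> u v; rewrite /= induced_sym; do 2!case: (_ \in X).
by rewrite (sym_connect_sym symR).
Qed.

End InducedConnectivity.

Section Separations.
Variables (T : finType) (e : rel T).
Hypotheses (e_sym : symmetric e) (e_irr : irreflexive e).
Variable k : nat.

Definition separation (W S A B : {set T}) : Prop :=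
  [/\ #|S| = k, A != set0, B != set0,
      [/\ [disjoint A & S], [disjoint B & S], [disjoint A & B] & W = A :|: S :|: B]
    & forall u v, u \in A -> v \in B -> ~~ e u v].

Lemma disjointUl_set (A1 A2 B : {set T}) :
  [disjoint A1 & B] -> [disjoint A2 & B] -> [disjoint A1 :|: A2 & B].
Proof. by rewrite -!setI_eq0 setIUl => /eqP-> /eqP->; rewrite setU0. Qed.

Lemma separationC W S A B : separation W S A B -> separation W S B A.
Proof.
case=> cS A0 B0 [dAS dBS dAB ->] nAB; split=> //.
  by split=> //; rewrite 1?disjoint_sym // setUC (setUC A S) setUA.
by move=> u v uB vA; rewrite e_sym nAB.
Qed.

Lemma card_separation W S A B : separation W S A B ->
  [/\ #|W| = #|A| + k + #|B|, #|A :|: S| = #|A| + k & #|B :|: S| = #|B| + k].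
Proof.
case=> cS _ _ [dAS dBS dAB ->] _.
have dASB : [disjoint A :|: S & B] by rewrite disjointUl_set // disjoint_sym.
rewrite !cardsU !(disjoint_setI0 dAS) !(disjoint_setI0 dBS) (disjoint_setI0 dASB).
by rewrite !cards0 cS !subn0.
Qed.

Lemma arcs_separation W S A B : separation W S A B ->
  arcs e W W = arcs e (A :|: S) (A :|: S) + (arcs e B B + 2 * arcs e B S).
Proof.
case=> _ _ _ [dAS dBS dAB ->] nAB.
have dASB : [disjoint A :|: S & B] by rewrite disjointUl_set // disjoint_sym.
rewrite arcsUU // [arcs e (A :|: S) B]arcsUl // (arcs_eq0 nAB) (arcsC e_sym S B); lia.
Qed.

Lemma disconnected_split (W X : {set T}) : X \subset W -> ~ connected_on X (induced e W) ->
  exists A B, [/\ A != set0, B != set0, [disjoint A & B], X = A :|: B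
                & forall u v, u \in A -> v \in B -> ~~ e u v].
Proof.
move=> XW; set R := [rel u v | [&& u \in X, v \in X & induced e W u v]] => nconn.
have [x [y [xX yX nxy]]] : exists x y, [/\ x \in X, y \in X & ~~ connect R x y].
  apply: NNPP => none; apply: nconn => x y xX yX; apply: NNPP => nxy.
  by apply: none; exists x, y; split=> //; apply/negP.
set D := [set z | connect R x z].
exists (X :&: D), (X :\: D); split.
- by apply/set0Pn; exists x; rewrite !inE xX connect0.
- by apply/set0Pn; exists y; rewrite !inE yX nxy.
- by rewrite disjoints_subset; apply/subsetP => z; rewrite !inE => /andP[_ ->].
- by rewrite setID.
move=> u v; rewrite !inE => /andP[uX xu] /andP[nxv vX]; apply: contra nxv => euv.
apply: (connect_trans xu); apply: connect1.
by rewrite /= uX vX /induced /= (subsetP XW u uX) (subsetP XW v vX).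
Qed.

Hypothesis no_k1_connected : ~ has_k1_connected_subgraph e k.

Lemma separator_exists (W : {set T}) : k.+2 <= #|W| ->
  exists2 S : {set T}, S \subset W /\ #|S| = k & ~ connected_on (W :\: S) (induced e W).
Proof.
move=> kW; apply: NNPP => noS.
apply/no_k1_connected/(has_k1_connected_induced e_sym e_irr (W := W)).
split=> // S SW cS; split; last by rewrite cardsDS // cS; lia.
by apply: NNPP => nconn; apply: noS; exists S.
Qed.

Lemma separation_exists (W : {set T}) : k.+2 <= #|W| -> exists S A B, separation W S A B.
Proof.
case/separator_exists=> S [SW cS] /(disconnected_split (subsetDl W S))[A [B [A0 B0 dAB XAB nAB]]].
have [AX BX] : A \subset W :\: S /\ B \subset W :\: S by rewrite XAB subsetUl subsetUr.
exists S, A, B; split=> //; split=> //.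
- by move: AX; rewrite subsetD => /andP[].
- by move: BX; rewrite subsetD => /andP[].
rewrite setUAC -XAB; apply/setP => z; rewrite !inE.
by case zS: (z \in S); rewrite ?(subsetP SW z zS) ?orbT ?andbT ?orbF.
Qed.

Lemma separation_exists_le (W : {set T}) : k.+2 <= #|W| ->
  exists S A B, separation W S A B /\ #|B| <= #|A|.
Proof.
case/separation_exists=> S [A [B sep]]; have [BA|AB] := leqP #|B| #|A|.
  by exists S, A, B.
by exists S, B, A; split; [apply: separationC | apply: ltnW].
Qed.

End Separations.

Section Bounds.
Variable k : nat.

(* [qbound (|W| - k) / 6] is the quadratic bound C(k,2) + k x + x^2/6 on e(G[W]). *)
Definition qbound (x : nat) : nat := 3 * k * (k - 1) + 6 * k * x + x * x.

(* Four times a bound on the edges inside A and from A to S: the trivial one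
   while |A| <= k + 1, then (|A| + |S| + k)/2 - 1 for each further vertex of A. *)
Definition side_bound (x y : nat) : nat :=
  if x <= k.+1 then 2 * x * (x - 1) + 4 * x * y
  else 2 * k * (k + 1) + 4 * (k + 1) * y + 2 * (x - k.+1) * (2 * k + y - 1)
       + (x - k.+1) * (x - k.+1 + 1).

Lemma side_bound_small x y : x <= k.+1 -> side_bound x y = 2 * x * (x - 1) + 4 * x * y.
Proof. by rewrite /side_bound => ->. Qed.

Lemma side_bound_large j y : side_bound (k + 2 + j) y =
  2 * k * (k + 1) + 4 * (k + 1) * y + 2 * j.+1 * (2 * k + y - 1) + j.+1 * (j.+1 + 1).
Proof.
rewrite /side_bound ifF; last by apply/negbTE; rewrite -ltnNge; lia.
by have -> : k + 2 + j - k.+1 = j.+1 by lia.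
Qed.

Lemma side_bound_decrl x y d : 0 < k -> k.+2 <= x -> 2 * d + 2 <= x + y + k ->
  side_bound (x - 1) y + 4 * d <= side_bound x y.
Proof.
move=> k_gt0 kx; have -> : x = k + 2 + (x - k.+2) by lia.
set j := x - k.+2; have -> : k + 2 + j - 1 = k.+1 + j by lia.
case: j => [|j] hd.
  by rewrite addn0 side_bound_small // side_bound_large; nia.
have -> : k.+1 + j.+1 = k + 2 + j by lia.
by rewrite !side_bound_large; nia.
Qed.

Lemma side_bound_decrr x y : k.+2 <= x -> 0 < y -> side_bound x (y - 1) + 4 * k <= side_bound x y.
Proof.
move=> kx y_gt0; have -> : x = k + 2 + (x - k.+2) by lia.
rewrite !side_bound_large; have -> : y = (y - 1).+1 by lia.
by rewrite subSS subn0; nia.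
Qed.

Lemma side_bound_linear b : 0 < b -> 2 * b < 3 * k -> 3 * side_bound b k <= 19 * k * b.
Proof.
move=> b_gt0 small_b; case: (leqP b k.+1) => kb.
  by rewrite side_bound_small //; nia.
move: small_b; have -> : b = k + 2 + (b - k.+2) by lia.
by rewrite side_bound_large; nia.
Qed.

Lemma qbound_addr a b x y z : b <= a -> 3 * x <= qbound a -> y <= b * (b - 1) -> z <= b * k ->
  3 * (x + (y + 2 * z)) <= qbound (a + b).
Proof.
rewrite /qbound => ba qa yb zb.
have : b * b <= a * b by rewrite leq_mul2r ba orbT.
nia.
Qed.

Lemma qbound_side_bound a b : 1 < k -> 0 < b -> b <= a -> 2 * a < 3 * k ->
  3 * k <= 2 * (a + b) -> 4 * qbound a + 6 * side_bound b k <= 38 * k * (a + b).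
Proof.
rewrite /qbound => k_gt1 b_gt0 ba small_a large_ab; case: (leqP b k.+1) => kb.
  by rewrite side_bound_small //; nia.
move: ba large_ab; have -> : b = k + 2 + (b - k.+2) by lia.
by rewrite side_bound_large; nia.
Qed.

End Bounds.

Section EdgeBounds.
Variables (T : finType) (e : rel T).
Hypotheses (e_sym : symmetric e) (e_irr : irreflexive e).
Variable k : nat.
Hypothesis no_k1_connected : ~ has_k1_connected_subgraph e k.

Lemma arcs_side_le (A S : {set T}) : 0 < k -> [disjoint A & S] ->
  2 * (arcs e A A + 2 * arcs e A S) <= side_bound k #|A| #|S|.
Proof.
move=> k_gt0; move: {2}(#|A| + #|S|) (leqnn (#|A| + #|S|)) => n.
elim: n A S => [|n IH] A S size_AS dAS.
  have : #|A| == 0 by rewrite -leqn0; lia.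
  by rewrite cards_eq0 => /eqP A0; rewrite A0 /arcs !big_set0.
case: (leqP #|A| k.+1) => small_A.
  have := arcs_self_le e_irr A; have := arcs_le e A S.
  by rewrite side_bound_small //; nia.
have cardW : #|A :|: S| = #|A| + #|S| by rewrite cardsU (disjoint_setI0 dAS) cards0 subn0.
have [/exists_inP[u uA low_u]|high_A] :=
  boolP [exists u in A, 2 * #|nbhd e u (A :|: S)| + 2 <= #|A :|: S| + k].
  have dA'S : [disjoint A :\ u & S] by apply: disjointWl dAS; apply: subsetDl.
  have cardA' : #|A :\ u| = #|A| - 1 by rewrite (cardsD1 u A) uA; lia.
  have := IH _ _ _ dA'S; rewrite cardA' => /(_ ltac:(lia)) IH'.
  rewrite cardW in low_u; have := side_bound_decrl k_gt0 small_A low_u.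
  have := arcs_side_deletel e_sym e_irr uA dAS; lia.
have [/exists_inP[s sS low_s]|high_S] := boolP [exists s in S, #|nbhd e s A| <= k].
  have dAS' : [disjoint A & S :\ s] by apply: disjointWr dAS; apply: subsetDl.
  have cardS' : #|S :\ s| = #|S| - 1 by rewrite (cardsD1 s S) sS; lia.
  have S_gt0 : 0 < #|S| by rewrite (cardsD1 s S) sS.
  have := IH _ _ _ dAS'; rewrite cardS' => /(_ ltac:(lia)) IH'.
  have := side_bound_decrr small_A S_gt0; rewrite (arcs_deleter e_sym A sS); lia.
exfalso; apply/no_k1_connected/(has_k1_connected_induced e_sym e_irr (W := A :|: S)).
apply: (induced_k1_connected e_sym e_irr (A := A)) => //; first exact: subsetUl.
  by move=> u uA; move/exists_inPn: high_A => /(_ u uA); rewrite -ltnNge; lia.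
move=> s; rewrite inE => /orP[-> //|sS _].
by move/exists_inPn: high_S => /(_ s sS); rewrite -ltnNge.
Qed.

Lemma arcs_side_linear (B S : {set T}) : 1 < k -> [disjoint B & S] -> #|S| = k ->
  0 < #|B| -> 2 * #|B| < 3 * k -> 6 * (arcs e B B + 2 * arcs e B S) <= 19 * k * #|B|.
Proof.
move=> k_gt1 dBS cS B_gt0 small_B.
have := arcs_side_le (ltnW k_gt1) dBS; have := side_bound_linear B_gt0 small_B.
by rewrite cS; lia.
Qed.

Lemma arcs_quad_bound (W : {set T}) : k <= #|W| -> 3 * arcs e W W <= qbound k (#|W| - k).
Proof.
move: {2}#|W| (leqnn #|W|) => n; elim: n W => [|n IH] W size_W kW.
  by have := arcs_self_le e_irr W; rewrite /qbound; nia.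
have [small_W|] := leqP #|W| k.+1.
  have := arcs_self_le e_irr W; rewrite /qbound.
  have [->|->] : #|W| = k \/ #|W| = k.+1 by lia.
    by rewrite subnn; nia.
  by rewrite subSnn; nia.
case/(separation_exists_le e_sym e_irr no_k1_connected)=> S [A [B [sep BA]]].
have [cW cAS _] := card_separation sep; rewrite (arcs_separation e_sym sep) cW.
have -> : #|A| + k + #|B| - k = #|A| + #|B| by lia.
have [cS _ B0 _ _] := sep; have B_gt0 : 0 < #|B| by rewrite card_gt0.
have := IH (A :|: S); rewrite cAS addnK => /(_ ltac:(lia) ltac:(lia)) IH'.
by apply: qbound_addr BA IH' (arcs_self_le e_irr B) _; rewrite -cS arcs_le.
Qed.

Lemma arcs_linear_bound (W : {set T}) : 1 < k -> 3 * k <= 2 * (#|W| - k) ->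
  6 * arcs e W W <= 19 * k * (#|W| - k).
Proof.
move=> k_gt1; move: {2}#|W| (leqnn #|W|) => n; elim: n W => [|n IH] W size_W large_W.
  lia.
have /(separation_exists_le e_sym e_irr no_k1_connected)[S [A [B [sep BA]]]] : k.+2 <= #|W|.
  by lia.
have [cW cAS cBS] := card_separation sep; rewrite (arcs_separation e_sym sep) cW.
have -> : #|A| + k + #|B| - k = #|A| + #|B| by lia.
have [cS _ B0 [_ dBS _ _] _] := sep; have B_gt0 : 0 < #|B| by rewrite card_gt0.
have IH_A : 3 * k <= 2 * #|A| -> 6 * arcs e (A :|: S) (A :|: S) <= 19 * k * #|A|.
  by have := IH (A :|: S); rewrite cAS addnK; apply; lia.
have IH_B : 3 * k <= 2 * #|B| -> 6 * arcs e (B :|: S) (B :|: S) <= 19 * k * #|B|.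
  by have := IH (B :|: S); rewrite cBS addnK; apply; lia.
have side_B : 6 * (arcs e B B + 2 * arcs e B S) <= 19 * k * #|B|.
  have [/IH_B|small_B] := leqP (3 * k) (2 * #|B|); last exact: arcs_side_linear.
  by rewrite arcsUU //; lia.
have [/IH_A|small_A] := leqP (3 * k) (2 * #|A|); first lia.
have := arcs_quad_bound (W := A :|: S); rewrite cAS addnK => /(_ ltac:(lia)) quad_A.
have := arcs_side_le (ltnW k_gt1) dBS; rewrite cS => side_le.
by have := qbound_side_bound k_gt1 B_gt0 BA small_A ltac:(lia); lia.
Qed.

End EdgeBounds.

Lemma dense_has_k1_connected_subgraph (T : finType) (e : rel T) k :
  symmetric e -> irreflexive e -> 1 < k -> 5 * k <= 2 * #|T| ->
  19 * k * (#|T| - k) < 12 * #|edges e| -> has_k1_connected_subgraph e k.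
Proof.
move=> e_sym e_irr k_gt1 large_T dense; apply: NNPP => no_k1_connected.
have := arcs_linear_bound e_sym e_irr no_k1_connected (W := setT) k_gt1.
rewrite cardsT arcs_setT (card_adjacent_pairs e_sym e_irr); lia.
Qed.

Unset Implicit Arguments.
Import Order.TTheory GRing.Theory Num.Theory.
Local Open Scope ring_scope.

Theorem theorem2 (k : nat) (T : finType) (e : rel T) (gamma : rat) :
  (2 <= k)%N ->
  symmetric e -> irreflexive e ->
  (#|T|%:R : rat) = gamma * k%:R ->
  5%:R / 2%:R <= gamma ->
  (#|edges e|%:R : rat) / (k%:R ^+ 2) > 19%:R / 12%:R * (gamma - 1) ->
  has_k1_connected_subgraph e k.
Proof.
move=> k_gt1 e_sym e_irr cardT large_gamma dense.
have k_gt0 : (0 : rat) < k%:R by rewrite ltr0n; lia.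
have large_T : (5 * k <= 2 * #|T|)%N.
  rewrite -(ler_nat rat) !natrM cardT.
  have : 5%:R / 2%:R * k%:R <= gamma * (k%:R : rat) by rewrite ler_pM2r.
  lra.
apply: dense_has_k1_connected_subgraph => //.
rewrite -(ltr_nat rat) !natrM natrB; last by lia.
rewrite ltr_pdivlMr ?exprn_gt0 // in dense.
by rewrite cardT; nra.
Qed.
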